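(* Let $(\Omega,\mathcal{F},(\mathcal{F}_t)_{t\in[0,T]},P)$ be a filtered probability space, $T>0$, and let $(X_t)_{t\in[0,T]}$ be a continuous martingale whose initial value $X_0$ is a deterministic constant. Let $M_T=\max_{0\le s\le T}X_s$. Then $$E\left(M_T\right)\le\sqrt{2}\,E\left(X_T^2\right)^{1/2}.$$ *)

From HB Require Import structures.
From mathcomp Require Import all_boot all_order all_algebra.
From mathcomp Require Import all_classical all_reals all_analysis.
Set Implicit Arguments. Unset Strict Implicit. Unset Printing Implicit Defensive.
Import Order.TTheory GRing.Theory Num.Theory numFieldNormedType.Exports.
Local Open Scope classical_set_scope.
Local Open Scope ring_scope.

Definition is_filtration d (Omega : measurableType d) (R : realType) (T : R)
    (F : R -> set (set Omega)) : Prop :=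
  (forall t, 0 <= t <= T -> sigma_algebra setT (F t)) /\
  (forall t, 0 <= t <= T -> F t `<=` measurable) /\
  (forall s t, 0 <= s -> s <= t -> t <= T -> F s `<=` F t).

(* (X_t) is a martingale w.r.t. F under P on [0,T]:
   adapted, integrable, and E[X_t 1_A] = E[X_s 1_A] for s <= t, A in F_s
   (the defining property of E[X_t | F_s] = X_s). *)
Definition is_martingale d (Omega : measurableType d) (R : realType) (T : R)
    (P : probability Omega R) (F : R -> set (set Omega)) (X : R -> Omega -> R) : Prop :=
  (forall t, 0 <= t <= T -> forall B : set R, measurable B -> F t (X t @^-1` B)) /\
  (forall t, 0 <= t <= T -> P.-integrable setT (fun w => (X t w)%:E)) /\
  (forall s t, 0 <= s -> s <= t -> t <= T -> forall A, F s A ->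
     (\int[P]_(w in A) (X t w)%:E = \int[P]_(w in A) (X s w)%:E)%E).

Definition continuous_paths (Omega : Type) (R : realType) (T : R)
    (X : R -> Omega -> R) : Prop :=
  forall w, {within `[0, T]%classic, continuous (fun t : R => X t w)}.

(* running maximum M_T = max_{0<=s<=T} X_s (as a supremum in \bar R;
   it is attained and finite for continuous paths) *)
Definition running_max (Omega : Type) (R : realType) (T : R)
    (X : R -> Omega -> R) (w : Omega) : \bar R :=
  ereal_sup [set (X s w)%:E | s in `[0, T]%classic].

From HB Require Import structures.
From mathcomp Require Import all_boot all_order all_algebra.
From mathcomp Require Import all_classical all_reals all_analysis.
From mathcomp Require Import measurable_realfun lra ring.
Import Order.TTheory GRing.Theory Num.Theory numFieldNormedType.Exports.
Local Open Scope classical_set_scope.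
Local Open Scope ring_scope.
Set Implicit Arguments. Unset Strict Implicit. Unset Printing Implicit Defensive.

(* Sample the path on the dyadic grid [k T / 2^n] and cut the excess of the
   sampled maximum over the starting value c into layers of height h:
   a = \sum_j h 1{max_k X_k >= c + (j+1) h}.  Doob's maximal inequality
   l P(max_k X_k >= l) <= E[X_T; max_k X_k >= l], applied at every level, gives
   E[a^2] <= 2 E[a (X_T - c)], hence E[(a - (X_T - c))^2] <= E[(X_T - c)^2].
   Since E[X_T] = c, this yields E[a]^2 <= E[X_T^2] - c^2.  Refining levels and
   grid, continuity of the paths and monotone convergence give
   E[M_T] <= c + sqrt(E[X_T^2] - c^2) <= sqrt 2 * sqrt(E[X_T^2]). *)

Section layer_sums.
Variables (R : realFieldType) (h : R) (e : nat -> R).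
Hypotheses (h_gt0 : 0 < h) (e_ge0 : forall j, 0 <= e j).

Let h_ge0 : 0 <= h. Proof. exact: ltW. Qed.

Lemma layer_sum_ge y J : (forall j, j.+1%:R * h <= y -> 1 <= e j) ->
  Num.min (y - h) (J%:R * h) <= \sum_(j < J) e j * h.
Proof.
move=> e_ge1; elim: J => [|J IH]; first by rewrite big_ord0 mul0r ge_min lexx orbT.
rewrite big_ord_recr /= -natr1 mulrDl mul1r.
have ehJ : 0 <= e J * h by rewrite mulr_ge0 ?e_ge0.
have [Jy|yJ] := leP (J.+1%:R * h) y; last by move: yJ IH; rewrite -natr1 !ge_min; lra.
have : h <= e J * h by rewrite ler_peMl // e_ge1.
move: Jy IH; rewrite -natr1 !ge_min; lra.
Qed.

Lemma min_le_layer_sum y b J : (forall j, j.+1%:R * h <= y -> 1 <= e j) ->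
  b < J%:R * h -> Num.min y b <= \sum_(j < J) e j * h + h.
Proof.
move=> e_ge1 bJ; have := layer_sum_ge J e_ge1.
rewrite !ge_min => /orP[yS|JS]; apply/orP; [left; lra | right].
by rewrite (le_trans (ltW bJ)) // (le_trans JS) // lerDl h_ge0.
Qed.

Hypothesis e_le1 : forall j, e j <= 1.

Lemma sqr_layer_sum_le J :
  (\sum_(j < J) e j * h) ^+ 2 <= 2 * \sum_(j < J) j.+1%:R * h ^+ 2 * e j.
Proof.
elim: J => [|J IH]; first by rewrite !big_ord0 expr0n mulr0.
rewrite !big_ord_recr /=; set S := \sum_(j < J) e j * h in IH *.
have SJ : S <= J%:R * h.
  apply: (@le_trans _ _ (\sum_(j < J) h)); last by rewrite sumr_const card_ord mulr_natl.
  by apply: ler_sum => j _; rewrite ler_piMl.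
have : 0 <= (J%:R * h - S) * (e J * h) by rewrite mulr_ge0 ?subr_ge0 ?mulr_ge0.
have : 0 <= e J * h ^+ 2 * (1 - e J) by rewrite mulr_ge0 ?subr_ge0 ?mulr_ge0 ?sqr_ge0.
(* (S + e h)^2 - S^2 = 2 S e h + e^2 h^2 <= (2 J + 1) e h^2 *)
have := e_ge0 J; rewrite -(natr1 J); nra.
Qed.

End layer_sums.

Lemma add_sqrt_le_sqrt2 (R : rcfType) (c q : R) : c ^+ 2 <= q ->
  c + Num.sqrt (q - c ^+ 2) <= Num.sqrt 2 * Num.sqrt q.
Proof.
move=> cq; rewrite -sqrtrM //.
have [s_le0|s_gt0] := leP (c + Num.sqrt (q - c ^+ 2)) 0.
  by rewrite (le_trans s_le0) ?sqrtr_ge0.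
rewrite -(ger0_norm (ltW s_gt0)) -sqrtr_sqr ler_wsqrtr //.
have := @sqr_sqrtr _ (q - c ^+ 2); rewrite subr_ge0 => /(_ cq).
move: (Num.sqrt _) => s s2; have := sqr_ge0 (c - s); nra.
Qed.

Lemma measurable_bigmaxr d (T : measurableType d) (R : realType)
    (g : T -> R) (f : nat -> T -> R) N :
  measurable_fun setT g -> (forall k, (k < N)%N -> measurable_fun setT (f k)) ->
  measurable_fun setT (fun x => \big[Num.max/g x]_(k < N) f k x).
Proof.
move=> mg; elim: N f => [|N IH] f mf.
  by under eq_fun do rewrite big_ord0.
under eq_fun do rewrite big_ord_recl; under eq_fun do under eq_bigr do rewrite lift0.
apply: measurable_maxr; first exact: mf.
by apply: (IH (fun k => f k.+1)) => k kN; apply: mf.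
Qed.

Lemma within_continuous_dist_lt (R : realType) (f : R -> R) (a b t e : R) :
  {within `[a, b], continuous f} -> a <= t <= b -> 0 < e ->
  exists2 r, 0 < r & forall s, a <= s <= b -> `|t - s| < r -> `|f t - f s| < e.
Proof.
move=> /subspace_continuousP /(_ t) + t_ab e_gt0.
rewrite /= in_itv /= t_ab => /(_ isT) /cvgr_dist_lt /(_ e e_gt0).
rewrite near_withinE => /nbhs_ballP [r r_gt0 near_t].
exists r => // s s_ab ts; apply: near_t; last by rewrite /= in_itv /= s_ab.
by rewrite /ball /=.
Qed.

Section mean.
Context d (Omega : measurableType d) (R : realType) (P : probability Omega R).

(* Discharges, through [//], the side condition [1 <= 2] of the L^2 closure
   lemmas. *)
Let one_le2 : (1 <= (2 : R)%:E)%E. Proof. by rewrite lee1n. Qed.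

Lemma integral_sqr_lty_Lfun2 (f : Omega -> R) : measurable_fun setT f ->
  (\int[P]_x (f x ^+ 2)%:E < +oo)%E -> f \in Lfun P 2%:E.
Proof.
move=> mf f2_fin; rewrite inE; apply/andP; split; first by rewrite inE.
rewrite inE /= /finite_norm unlock /Lnorm poweR_lty //.
apply: le_lt_trans f2_fin; rewrite le_eqVlt; apply/orP; left; apply/eqP.
apply: eq_integral => x _ /=.
have -> : `|f x| `^ 2 = `|f x| ^+ 2 by rewrite -powR_mulrn.
by rewrite real_normK ?num_real.
Qed.

Lemma bounded_Lfun2 (f : Omega -> R) M : measurable_fun setT f ->
  (forall x, `|f x| <= M) -> f \in Lfun P 2%:E.
Proof.
move=> mf fM; apply: integral_sqr_lty_Lfun2 => //.
apply: (@le_lt_trans _ _ (\int[P]_x (M ^+ 2)%:E)%E); last first.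
  by rewrite integral_cst // lte_mul_pinfty ?lee_fin ?sqr_ge0 // ltey_eq fin_num_measure.
apply: ge0_le_integral => //.
- by move=> x _; rewrite lee_fin sqr_ge0.
- exact/measurable_EFinP/measurable_funX.
- move=> x _; rewrite lee_fin -real_normK ?num_real //.
  by rewrite lerXn2r ?nnegrE // (le_trans _ (fM x)).
Qed.

Lemma indic_Lfun2 (A : set Omega) : measurable A -> \1_A \in Lfun P 2%:E.
Proof.
move=> mA; apply: (@bounded_Lfun2 _ 1); first exact: measurable_indic.
by move=> x; rewrite indicE; case: (x \in A); rewrite ?normr1 ?normr0.
Qed.

Lemma Lfun2_Lfun1 f : f \in Lfun P 2%:E -> f \in Lfun P 1.
Proof. by move=> f2; apply: Lfun_subset12 => //; exact: fin_num_measure. Qed.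

Lemma Lfun2_sqr f : f \in Lfun P 2%:E -> f ^+ 2 \in Lfun P 1.
Proof. by move=> f2; rewrite expr2; exact: Lfun2_mul_Lfun1. Qed.

(* [fine] maps an infinite expectation to 0, hence the [Lfun P 1] hypotheses. *)
Definition mean (f : Omega -> R) : R := fine ('E_P[f])%E.

Lemma meanE f : f \in Lfun P 1 -> ('E_P[f])%E = (mean f)%:E.
Proof. by move=> f1; rewrite /mean fineK // expectation_fin_num. Qed.

Lemma integral_sqr_mean f : f \in Lfun P 2%:E ->
  (\int[P]_x (f x ^+ 2)%:E)%E = (mean (f ^+ 2))%:E.
Proof. by move=> f2; rewrite -meanE ?Lfun2_sqr // unlock exprfctE. Qed.

Lemma meanD f g : f \in Lfun P 1 -> g \in Lfun P 1 -> mean (f \+ g) = mean f + mean g.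
Proof. by move=> f1 g1; rewrite /mean expectationD // !meanE. Qed.

Lemma meanB f g : f \in Lfun P 1 -> g \in Lfun P 1 -> mean (f \- g) = mean f - mean g.
Proof. by move=> f1 g1; rewrite /mean expectationB // !meanE. Qed.

Lemma meanZ k f : f \in Lfun P 1 -> mean (k \o* f) = k * mean f.
Proof. by move=> f1; rewrite /mean expectationZl // !meanE. Qed.

Lemma mean_cst r : mean (cst r) = r.
Proof. by rewrite /mean expectation_cst. Qed.

Lemma mean_sum n (f : 'I_n -> Omega -> R) : (forall i, f i \in Lfun P 1) ->
  mean (\sum_(i < n) f i) = \sum_(i < n) mean (f i).
Proof.
elim: n f => [|n IH] f f1; first by rewrite !big_ord0 mean_cst.
rewrite !big_ord_recr /= meanD ?IH //.
by apply: rpred_sum => i _.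
Qed.

Lemma ler_mean f g : f \in Lfun P 1 -> g \in Lfun P 1 -> (forall x, f x <= g x) ->
  mean f <= mean g.
Proof.
move=> f1 g1 fg; rewrite -lee_fin -!meanE // unlock.
by apply: le_integral => //; try exact/Lfun1_integrable; move=> x _; rewrite lee_fin.
Qed.

Lemma mean_ge0 f : (forall x, 0 <= f x) -> 0 <= mean f.
Proof. by move=> f_ge0; rewrite /mean fine_ge0 // expectation_ge0. Qed.

Lemma sqr_mean_le f : f \in Lfun P 2%:E -> mean f ^+ 2 <= mean (f ^+ 2).
Proof.
move=> f2; have := variance_ge0 P f; rewrite varianceE // meanE ?Lfun2_sqr //.
by rewrite meanE ?Lfun2_Lfun1 // -EFin_expe -EFinB lee_fin subr_ge0.
Qed.

Lemma sqr_mean_le_of_cross a Y : a \in Lfun P 2%:E -> Y \in Lfun P 2%:E ->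
  mean Y = 0 -> mean (a ^+ 2) <= 2 * mean (a \* Y) -> mean a ^+ 2 <= mean (Y ^+ 2).
Proof.
move=> a2 Y2 Y_centred cross.
have aY2 : a \- Y \in Lfun P 2%:E by exact: rpredB.
have aY1 : a \* Y \in Lfun P 1 by exact: Lfun2_mul_Lfun1.
have expand : (a \- Y) ^+ 2 = a ^+ 2 \- 2 \o* (a \* Y) \+ Y ^+ 2.
  by rewrite !exprfctE; apply: funext => x /=; ring.
have -> : mean a = mean (a \- Y) by rewrite meanB ?Lfun2_Lfun1 // Y_centred subr0.
apply: le_trans (sqr_mean_le aY2) _.
rewrite expand meanD ?meanB ?meanZ ?Lfun2_sqr ?rpredB ?Lfun_scale //; first lra.
exact: Lfun2_sqr.
Qed.

Lemma expectation_indicM (A : set Omega) f : measurable A ->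
  ('E_P[\1_A \* f] = \int[P]_(x in A) (f x)%:E)%E.
Proof.
move=> mA; rewrite unlock [RHS]integral_mkcond; apply: eq_integral => x _ /=.
by rewrite patchE indicE; case: (x \in A); rewrite ?mul1r ?mul0r.
Qed.

End mean.

Section dyadic_grid.
Variables (R : realType) (T : R).
Hypothesis T_gt0 : 0 < T.

Definition grid n k : R := k%:R * (T / (2 ^ n)%:R).

Let exp2_gt0 n : 0 < (2 ^ n)%:R :> R. Proof. by rewrite ltr0n expn_gt0. Qed.

Lemma grid_nd n : nondecreasing_seq (grid n).
Proof. by move=> k m km; rewrite ler_wpM2r ?ler_nat // divr_ge0 // (ltW T_gt0). Qed.

Lemma grid0 n : grid n 0 = 0.
Proof. by rewrite /grid mul0r. Qed.

Lemma grid_last n : grid n (2 ^ n) = T.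
Proof. by rewrite /grid mulrC divfK // gt_eqF. Qed.

Lemma grid_in n k : (k <= 2 ^ n)%N -> 0 <= grid n k <= T.
Proof.
move=> kn; apply/andP; split; first by rewrite mulr_ge0 ?divr_ge0 // (ltW T_gt0).
by rewrite -[X in _ <= X](grid_last n) grid_nd.
Qed.

Lemma grid_double n k : grid n.+1 k.*2 = grid n k.
Proof.
rewrite /grid -muln2 expnS !natrM; have := exp2_gt0 n; rewrite lt0r => /andP[n0 _].
by field; rewrite n0.
Qed.

Lemma grid_mesh_lt r : 0 < r -> exists n, T / (2 ^ n)%:R < r.
Proof.
move=> r_gt0; exists (Num.truncn (T / r)).+1.
rewrite ltr_pdivrMr // mulrC -ltr_pdivrMr //.
apply: lt_le_trans (truncnS_gt _) _; rewrite ler_nat.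
exact: ltnW (ltn_expl _ (isT : (1 < 2)%N)).
Qed.

Lemma grid_near n t : 0 <= t <= T ->
  exists2 k, (k <= 2 ^ n)%N & `|t - grid n k| < T / (2 ^ n)%:R.
Proof.
move=> /andP[t_ge0 tT]; set q := T / (2 ^ n)%:R.
have q_gt0 : 0 < q by rewrite divr_gt0.
have /andP[kt tk] := truncn_itv (divr_ge0 t_ge0 (ltW q_gt0)).
rewrite ler_pdivlMr // in kt; rewrite ltr_pdivrMr // -natr1 mulrDl mul1r in tk.
exists (Num.truncn (t / q)); last by rewrite ger0_norm ?subr_ge0 // /grid -/q; lra.
rewrite -(ler_nat R) (@le_trans _ _ (t / q)) ?ler_pdivlMr //.
by rewrite ler_pdivrMr // /q mulrCA divff ?mulr1 // gt_eqF.
Qed.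

End dyadic_grid.

Section martingale.
Context d (Omega : measurableType d) (R : realType) (P : probability Omega R)
  (T : R) (F : R -> set (set Omega)) (X : R -> Omega -> R) (c : R).
Hypotheses (T_gt0 : 0 < T) (HF : is_filtration T F) (HM : is_martingale T P F X)
  (X0 : forall w, X 0 w = c).

Let one_le2 : (1 <= (2 : R)%:E)%E. Proof. by rewrite lee1n. Qed.
Let T_in : 0 <= T <= T. Proof. by rewrite lexx ltW. Qed.
Let zero_in : (0 : R) <= 0 <= T. Proof. by rewrite lexx ltW. Qed.

Lemma integrable_X t : 0 <= t <= T -> P.-integrable setT (fun w => (X t w)%:E).
Proof. by move=> t0T; case: HM => _ [+ _]; apply. Qed.

Lemma measurable_X t : 0 <= t <= T -> measurable_fun setT (X t).
Proof. by move=> /integrable_X /integrableP [/measurable_EFinP]. Qed.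

Lemma Lfun1_X t : 0 <= t <= T -> X t \in Lfun P 1.
Proof. by move=> /integrable_X ?; apply/Lfun1_integrable. Qed.

Lemma measurable_filtration t A : 0 <= t <= T -> F t A -> measurable A.
Proof. by move=> t0T; case: HF => _ [+ _]; apply. Qed.

Lemma mean_X t : 0 <= t <= T -> mean P (X t) = c.
Proof.
move=> /andP[t_ge0 tT].
have [F0_0 F0_C _] : sigma_algebra setT (F 0) by case: HF => + _; apply; exact: zero_in.
have F0_T : F 0 setT by rewrite -(setD0 setT); exact: F0_C.
rewrite /mean unlock (HM.2.2 0 t (lexx 0) t_ge0 tT setT F0_T).
by rewrite -[RHS](mean_cst P c) /mean unlock; under eq_integral do rewrite X0.
Qed.

Lemma integral_ge_level t A l : 0 <= t <= T -> measurable A ->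
  (forall w, A w -> l <= X t w) -> (l%:E * P A <= \int[P]_(w in A) (X t w)%:E)%E.
Proof.
move=> t0T mA lA; rewrite -integral_cst //.
apply: le_integral => //.
- exact: finite_measure_integrable_cst.
- exact: integrableS (integrable_X t0T).
- by move=> w /set_mem Aw; rewrite lee_fin lA.
Qed.

Section sampling.
Variables (s : nat -> R) (s_nd : nondecreasing_seq s) (s0_ge0 : 0 <= s 0).

Definition hit_set N l := [set w | exists2 k, (k <= N)%N & l <= X (s k) w].

Let s_in0T k N : (k <= N)%N -> s N <= T -> 0 <= s k <= T.
Proof. by move=> kN sNT; rewrite (le_trans s0_ge0) ?s_nd // (le_trans (s_nd kN)). Qed.

Lemma hit_set_in_filtration N l : s N <= T -> F (s N) (hit_set N l).
Proof.
move=> sNT; have /andP[sN_ge0 _] := s_in0T (leqnn N) sNT.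
have [F_0 _ F_bigcup] : sigma_algebra setT (F (s N)).
  by case: HF => + _; apply; rewrite sN_ge0.
have -> : hit_set N l =
    \bigcup_k (if (k <= N)%N then X (s k) @^-1` `[l, +oo[ else set0).
  apply/seteqP; split => w /=.
    by case=> k kN lX; exists k => //; rewrite kN /= in_itv /= lX.
  by case=> k _; case: ifPn => // kN /=; rewrite in_itv /= andbT; exists k.
apply: F_bigcup => k; case: ifPn => // kN.
have /andP[sk_ge0 skT] := s_in0T kN sNT.
apply: (HF.2.2 _ _ sk_ge0 (s_nd kN) sNT).
by apply: HM.1 => //; rewrite sk_ge0.
Qed.

Lemma hit_setS N l : hit_set N.+1 l =
  hit_set N l `|` ([set w | l <= X (s N.+1) w] `\` hit_set N l).
Proof.
apply/seteqP; split => w /=.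
  case=> k; rewrite leq_eqVlt => /orP[/eqP -> lX|kN lX].
    by have [|] := pselect (hit_set N l w); [left|right].
  by left; exists k.
case=> [[k kN lX]|[lX _]]; first by exists k => //; rewrite ltnW.
by exists N.+1.
Qed.

Lemma maximal_inequality N l : s N <= T ->
  (l%:E * P (hit_set N l) <= \int[P]_(w in hit_set N l) (X (s N) w)%:E)%E.
Proof.
elim: N => [|N IH] sNT.
  have s0T := s_in0T (leqnn 0) sNT.
  apply: integral_ge_level => //.
    exact: measurable_filtration s0T (hit_set_in_filtration _ sNT).
  by move=> w [k]; rewrite leqn0 => /eqP ->.
have sN_T : s N <= T by rewrite (le_trans _ sNT) ?s_nd.
set H := hit_set N l; set B := [set w | l <= X (s N.+1) w] `\` H.
have mH : measurable H.
  exact: measurable_filtration (s_in0T (leqnn N) sN_T) (hit_set_in_filtration _ sN_T).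
have mB : measurable B.
  apply: measurableD => //; rewrite -[X in measurable X]setTI.
  have := measurable_X (s_in0T (leqnn _) sNT) measurableT (measurable_itv `[l, +oo[).
  by congr measurable; apply/seteqP; split => w /=; rewrite in_itv /= andbT.
have HB : [disjoint H & B] by apply/disj_setPS => w [Hw [_]].
have mXN : measurable_fun (H `|` B) (fun w => (X (s N.+1) w)%:E).
  apply: (measurable_funS measurableT) => //.
  exact/measurable_EFinP/measurable_X/(s_in0T (leqnn _) sNT).
rewrite hit_setS -/H -/B measureU ?integral_setU //; last exact/disj_set2P.
rewrite muleDr ?ge0_adde_def ?inE ?measure_ge0 //.
apply: leeD; last first.
  by apply: integral_ge_level => //; [exact: s_in0T (leqnn _) sNT | move=> w []].
have /andP[sN_ge0 _] := s_in0T (leqnn N) sN_T.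
by rewrite (HM.2.2 (s N) (s N.+1)) ?IH ?s_nd //; exact: hit_set_in_filtration.
Qed.

Definition layer_sum N h J : Omega -> R :=
  \sum_(j < J) h \o* \1_(hit_set N (c + j.+1%:R * h)).

Section layers.
Variables (N J : nat) (h : R).
Hypotheses (sN : s N = T) (h_gt0 : 0 < h) (XT2 : X T \in Lfun P 2%:E).

Let level j := c + j.+1%:R * h.
Let hit j := hit_set N (level j).
Let Y := X T \- cst c.
Let gain j := h \o* (\1_(hit j) \* (X T \- cst (level j))).

Let sN_le : s N <= T. Proof. by rewrite sN. Qed.

Let measurable_hit j : measurable (hit j).
Proof.
apply: (measurable_filtration (t := s N)); first by rewrite sN.
exact: hit_set_in_filtration.
Qed.

Lemma Lfun2_layer_sum : layer_sum N h J \in Lfun P 2%:E.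
Proof.
rewrite /layer_sum; apply: rpred_sum => j _; apply: Lfun_scale => //.
exact/indic_Lfun2/measurable_hit.
Qed.

Let Lfun2_Y : Y \in Lfun P 2%:E.
Proof. by apply: rpredB => //; exact: Lfun_cst. Qed.

Let Lfun1_gain j : gain j \in Lfun P 1.
Proof.
apply: Lfun_scale => //; apply: Lfun2_mul_Lfun1; first exact/indic_Lfun2/measurable_hit.
by apply: rpredB => //; exact: Lfun_cst.
Qed.

Let mean_gain_ge0 j : 0 <= mean P (gain j).
Proof.
rewrite meanZ; last first.
  apply: Lfun2_mul_Lfun1; first exact/indic_Lfun2/measurable_hit.
  by apply: rpredB => //; exact: Lfun_cst.
apply: mulr_ge0; first exact: ltW.
rewrite /mean expectation_indicM // integralB_EFin //; first last.
- exact: finite_measure_integrable_cst.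
- exact: integrableS (integrable_X T_in).
rewrite (integral_cst P (measurable_hit j) (level j)%:E).
rewrite fine_ge0 // sube_ge0 ?fin_numM ?fin_num_measure //.
by have := maximal_inequality (level j) sN_le; rewrite sN.
Qed.

Let layer_sum_sqr_le w :
  (layer_sum N h J ^+ 2) w <=
    (2 \o* (layer_sum N h J \* Y) \- 2 \o* \sum_(j < J) gain j) w.
Proof.
rewrite /= exprfctE /layer_sum /Y /gain !fct_sumE /=.
set e := fun j => \1_(hit j) w : R.
have e_ge0 j : 0 <= e j by rewrite /e indicE ler0n.
have e_le1 j : e j <= 1 by rewrite /e indicE lern1 leq_b1.
(* a Y - \sum_j gain j = \sum_j (j + 1) h^2 1_(hit j) *)
rewrite (_ : _ - _ = 2 * \sum_(j < J) j.+1%:R * h ^+ 2 * e j).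
  exact: sqr_layer_sum_le.
rewrite !mulr_suml mulr_sumr -sumrB; apply: eq_bigr => i _.
by rewrite /e /hit /level -natr1; ring.
Qed.

Let mean_Y : mean P Y = 0.
Proof. by rewrite meanB ?Lfun1_X ?Lfun_cst // mean_X // mean_cst subrr. Qed.

Let mean_Y_sqr : mean P (Y ^+ 2) = mean P (X T ^+ 2) - c ^+ 2.
Proof.
have -> : Y ^+ 2 = X T ^+ 2 \- (2 * c) \o* X T \+ cst (c ^+ 2).
  by rewrite /Y !exprfctE; apply: funext => w /=; ring.
have XT1 := Lfun1_X T_in; have XT_sqr := Lfun2_sqr XT2.
have cXT1 : (2 * c) \o* X T \in Lfun P 1 by exact: Lfun_scale.
by rewrite meanD ?rpredB ?Lfun_cst // meanB // meanZ // mean_X // mean_cst; ring.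
Qed.

Let layer_sum_cross :
  mean P (layer_sum N h J ^+ 2) <= 2 * mean P (layer_sum N h J \* Y).
Proof.
have gain1 : \sum_(j < J) gain j \in Lfun P 1.
  by apply: rpred_sum => j _; exact: Lfun1_gain.
have cross1 : layer_sum N h J \* Y \in Lfun P 1.
  exact: Lfun2_mul_Lfun1 Lfun2_layer_sum Lfun2_Y.
apply: le_trans (ler_mean _ _ layer_sum_sqr_le) _.
- exact: Lfun2_sqr Lfun2_layer_sum.
- by apply: rpredB; apply: Lfun_scale.
rewrite meanB ?meanZ ?Lfun_scale // mean_sum // gerBl ?mulr_ge0 //.
by apply: sumr_ge0 => j _; exact: mean_gain_ge0.
Qed.

Lemma mean_layer_sum_le :
  mean P (layer_sum N h J) <= Num.sqrt (mean P (X T ^+ 2) - c ^+ 2).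
Proof.
have mean_ge0_layer_sum : 0 <= mean P (layer_sum N h J).
  apply: mean_ge0 => w; rewrite /layer_sum fct_sumE; apply: sumr_ge0 => j _ /=.
  by rewrite indicE mulr_ge0 // (ltW h_gt0).
rewrite -(ger0_norm mean_ge0_layer_sum) -sqrtr_sqr ler_wsqrtr // -mean_Y_sqr.
exact: sqr_mean_le_of_cross Lfun2_layer_sum Lfun2_Y mean_Y layer_sum_cross.
Qed.

End layers.
End sampling.

Section grid_maximum.
Hypothesis paths : continuous_paths T X.

Definition grid_max n w := \big[Num.max/X 0 w]_(k < (2 ^ n).+1) X (grid T n k) w.

Definition excess n w := Num.min (grid_max n w - c) n%:R.

Lemma measurable_grid_max n : measurable_fun setT (grid_max n).
Proof.
apply: (measurable_bigmaxr (f := fun k => X (grid T n k))) => [|k kn].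
  exact: measurable_X zero_in.
by apply/measurable_X/grid_in => //; rewrite -ltnS.
Qed.

Lemma measurable_excess n : measurable_fun setT (excess n).
Proof.
apply: measurable_minr => //; apply: measurable_funB => //.
exact: measurable_grid_max.
Qed.

Lemma excess_ge0 n w : 0 <= excess n w.
Proof. by rewrite le_min subr_ge0 -(X0 w) bigmax_ge_id ler0n. Qed.

Lemma excess_le n w : excess n w <= n%:R.
Proof. by rewrite ge_min lexx orbT. Qed.

Lemma Lfun1_excess n : excess n \in Lfun P 1.
Proof.
apply/Lfun2_Lfun1/(@bounded_Lfun2 _ _ _ _ _ n%:R); first exact: measurable_excess.
by move=> w; rewrite ger0_norm ?excess_ge0 ?excess_le.
Qed.

Lemma grid_max_nd w : nondecreasing_seq (grid_max^~ w).
Proof.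
apply/nondecreasing_seqP => n; apply: bigmax_le => [|k _]; first exact: bigmax_ge_id.
have k2n : (k.*2 < (2 ^ n.+1).+1)%N by rewrite ltnS expnS mul2n leq_double -ltnS.
by rewrite -grid_double (bigmax_sup (Ordinal k2n)).
Qed.

Lemma excess_nd w : nondecreasing_seq (excess^~ w).
Proof.
move=> n m nm; rewrite le_min !ge_min lerB ?grid_max_nd //=.
by rewrite ler_nat nm !orbT.
Qed.

Lemma excess_le_max n w tw :
  (forall t, 0 <= t <= T -> X t w <= X tw w) -> excess n w <= X tw w - c.
Proof.
move=> tw_max; rewrite ge_min lerD2r; apply/orP; left; apply: bigmax_le => [|k _].
  exact: tw_max zero_in.
by apply/tw_max/grid_in => //; rewrite -ltnS.
Qed.

Lemma grid_max_approx w tw e : 0 <= tw <= T -> 0 < e ->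
  exists n, X tw w - e <= grid_max n w.
Proof.
move=> twT e_gt0.
have [r r_gt0 near_tw] := within_continuous_dist_lt (@paths w) twT e_gt0.
have [n mesh] := grid_mesh_lt T r_gt0.
have [k kn tw_k] := grid_near T_gt0 n twT.
exists n; have k2n : (k < (2 ^ n).+1)%N by [].
apply: (@bigmax_sup _ _ _ _ (Ordinal k2n)) => //=.
have := near_tw _ (grid_in T_gt0 kn) (lt_trans tw_k mesh).
rewrite ltr_norml; lra.
Qed.

Lemma excess_approx w tw e : 0 <= tw <= T -> 0 < e ->
  exists n, X tw w - c - e <= excess n w.
Proof.
move=> twT e_gt0; have [n1 n1_max] := grid_max_approx w twT e_gt0.
set n2 := (Num.truncn (X tw w - c)).+1; exists (maxn n1 n2).
rewrite le_min; apply/andP; split.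
  by have := grid_max_nd w (leq_maxl n1 n2); lra.
have : n2%:R <= (maxn n1 n2)%:R :> R by rewrite ler_nat leq_maxr.
have := truncnS_gt (X tw w - c); rewrite -/n2; lra.
Qed.

Lemma grid_max_hit n l w : l <= grid_max n w -> hit_set (grid T n) (2 ^ n) l w.
Proof.
case/bigmax_geP => [lX0|[k _ lXk]]; first by exists 0%N; rewrite ?grid0.
by exists k => //; rewrite -ltnS.
Qed.

Lemma mean_excess_le n : X T \in Lfun P 2%:E ->
  mean P (excess n) <= Num.sqrt (mean P (X T ^+ 2) - c ^+ 2).
Proof.
move=> XT2; apply/ler_addgt0Pr => h h_gt0.
set J := (Num.truncn (n%:R / h)).+1.
have nJ : n%:R < J%:R * h by rewrite -ltr_pdivrMr // truncnS_gt.
set a := layer_sum (grid T n) (2 ^ n) h J.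
have a1 : a \in Lfun P 1.
  apply/Lfun2_Lfun1/Lfun2_layer_sum; last exact: grid_last.
  - exact: grid_nd.
  - by rewrite grid0.
have excess_le_a w : excess n w <= (a \+ cst h) w.
  set e := fun j => \1_(hit_set (grid T n) (2 ^ n) (c + j.+1%:R * h)) w : R.
  rewrite /= /a /layer_sum fct_sumE /=.
  have e_ge0 j : 0 <= e j by rewrite /e indicE ler0n.
  have e_ge1 j : j.+1%:R * h <= grid_max n w - c -> 1 <= e j.
    by move=> jh; rewrite /e indicE mem_set //; apply: grid_max_hit; lra.
  exact: min_le_layer_sum h_gt0 e_ge0 _ _ _ e_ge1 nJ.
have mean_a_h : mean P (a \+ cst h) = mean P a + h by rewrite meanD ?Lfun_cst // mean_cst.
have a_h1 : a \+ cst h \in Lfun P 1 by rewrite rpredD ?Lfun_cst.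
apply: le_trans (ler_mean (Lfun1_excess n) a_h1 excess_le_a) _.
rewrite mean_a_h lerD2r.
apply: mean_layer_sum_le => //; [exact: grid_nd | by rewrite grid0 | exact: grid_last].
Qed.

Lemma running_max_attained w : exists2 tw, 0 <= tw <= T &
  running_max T X w = (X tw w)%:E /\ forall t, 0 <= t <= T -> X t w <= X tw w.
Proof.
have [tw twT tw_max] := EVT_max (ltW T_gt0) (@paths w).
rewrite in_itv /= in twT.
have tw_max' t : 0 <= t <= T -> X t w <= X tw w.
  by move=> tT; apply: tw_max; rewrite in_itv.
exists tw => //; split => //; apply/eqP; rewrite eq_le; apply/andP; split.
  by apply: ge_ereal_sup => _ [t tT <-]; rewrite lee_fin tw_max'.
by apply: ereal_sup_ubound; exists tw.
Qed.

Let EFin_excess_nd w : nondecreasing_seq (fun n => (excess n w)%:E).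
Proof. by move=> n m nm; rewrite lee_fin excess_nd. Qed.

Lemma running_max_excess w :
  running_max T X w = (c%:E + limn (fun n => (excess n w)%:E))%E.
Proof.
have [tw twT [-> tw_max]] := running_max_attained w.
rewrite (cvg_lim _ (ereal_nondecreasing_cvgn (EFin_excess_nd w))) //.
suff -> : ereal_sup (range (fun n => (excess n w)%:E)) = (X tw w - c)%:E.
  by rewrite -EFinD addrC subrK.
apply/eqP; rewrite eq_le; apply/andP; split.
  by apply: ge_ereal_sup => _ [n _ <-]; rewrite lee_fin excess_le_max.
apply/lee_addgt0Pr => e e_gt0; have [n excess_n] := excess_approx w twT e_gt0.
apply: (@le_trans _ _ ((excess n w)%:E + e%:E)%E).
  by rewrite -EFinD lee_fin -lerBlDr.
by rewrite leeD2r //; apply: ereal_sup_ubound; exists n.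
Qed.

Lemma integral_running_max_le : X T \in Lfun P 2%:E ->
  (\int[P]_w running_max T X w <= (c + Num.sqrt (mean P (X T ^+ 2) - c ^+ 2))%:E)%E.
Proof.
move=> XT2; set V := mean P (X T ^+ 2) - c ^+ 2.
set G := fun w => limn (fun n => (excess n w)%:E).
have G_ge0 w : (0 <= G w)%E.
  apply: lime_ge; first exact: ereal_nondecreasing_is_cvgn.
  by apply: nearW => n; rewrite lee_fin excess_ge0.
have mG : measurable_fun setT G.
  apply: (emeasurable_fun_cvg (fun n w => (excess n w)%:E)) => [n|w _].
    exact/measurable_EFinP/measurable_excess.
  exact: ereal_nondecreasing_is_cvgn.
have integral_G : (\int[P]_w G w <= (Num.sqrt V)%:E)%E.
  rewrite /G monotone_convergence //; first last.
  - by move=> n w _; rewrite lee_fin excess_ge0.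
  - by move=> n; exact/measurable_EFinP/measurable_excess.
  have integral_excess n : (\int[P]_w (excess n w)%:E)%E = (mean P (excess n))%:E.
    by rewrite -meanE ?Lfun1_excess // unlock.
  apply: lime_le.
    apply: ereal_nondecreasing_is_cvgn => n m nm.
    rewrite !integral_excess lee_fin; apply: ler_mean; rewrite ?Lfun1_excess //.
    by move=> w; exact: excess_nd.
  by apply: nearW => n; rewrite integral_excess lee_fin mean_excess_le.
have integrable_G : P.-integrable setT G.
  apply/integrableP; split => //; apply: le_lt_trans (ltry (Num.sqrt V)).
  by under eq_integral do rewrite gee0_abs //.
rewrite (eq_integral (fun w => c%:E + G w)%E); last first.
  by move=> w _; rewrite running_max_excess.
rewrite integralD //; last exact: finite_measure_integrable_cst.
have -> : (\int[P]_w c%:E)%E = c%:E by rewrite -[RHS](expectation_cst P c) unlock.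
by rewrite EFinD leeD2l.
Qed.

End grid_maximum.
End martingale.

Theorem mainTheorem6 (d : measure_display) (Omega : measurableType d)
  (R : realType) (P : probability Omega R) (T : R) (F : R -> set (set Omega))
  (X : R -> Omega -> R) :
  0 < T ->
  is_filtration T F ->
  is_martingale T P F X ->
  continuous_paths T X ->
  (exists c : R, forall w, X 0 w = c) ->
  (\int[P]_w running_max T X w <=
     (Num.sqrt 2)%:E * poweR (\int[P]_w ((X T w) ^+ 2)%:E) 2^-1)%E.
Proof.
move=> T_gt0 HF HM paths [c X0].
have T0T : 0 <= T <= T by rewrite lexx ltW.
have [XT2_fin|] := boolP (\int[P]_w ((X T w) ^+ 2)%:E < +oo)%E; last first.
  rewrite ltey negbK => /eqP ->.
  by rewrite poweRyr ?invr_neq0 // muleC gt0_mulye ?leey // lte_fin sqrtr_gt0.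
have XT2 : X T \in Lfun P 2%:E.
  exact: integral_sqr_lty_Lfun2 (measurable_X HM T0T) XT2_fin.
have c2_le : c ^+ 2 <= mean P (X T ^+ 2).
  by rewrite -(mean_X T_gt0 HF HM X0 T0T); exact: sqr_mean_le.
rewrite integral_sqr_mean // poweR_EFin powR12_sqrt ?(le_trans (sqr_ge0 c)) //.
rewrite -EFinM.
apply: le_trans (integral_running_max_le T_gt0 HF HM X0 paths XT2) _.
by rewrite lee_fin add_sqrt_le_sqrt2.
Qed.
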